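(* Let $\psi_0:\mathbb{R}\to\mathbb{R}$ be any càdlàg function with $\lim_{|x|\to\infty}x^{-2}\psi_0(x)=0$, and let $\mathbf{r},\mathbf{s},\mathbf{t}$ be as in the context. Then $\mathbf{s}=\mathbf{t}$.
   Context: Write $\bar\psi(y):=\psi_0(y)\vee\psi_0(y-)$. Define $\mathbf{t}:=\inf\{y\ge0: \bar\psi(y-x)-\bar\psi(y)\le\tfrac12x^2 \text{ and } \bar\psi(y+x)-\bar\psi(y)<\tfrac12x^2 \text{ for all } x>0\}$ (equivalently, the first $y\ge0$ with $a(y)=y$, where $a(x)$ is the largest maximizer of $z\mapsto\bar\psi(z)-\tfrac12(z-x)^2$); $\mathbf{r}:=\inf\{y\ge0: \bar\psi(y-x)-\bar\psi(y)\le\tfrac12x^2 \text{ for all } x>0\}$; $\mathbf{s}:=\inf\{y\ge\mathbf{r}: \bar\psi(y+x)-\bar\psi(y)<\tfrac12x^2 \text{ for all } x>0\}$. *)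

From Stdlib Require Import Reals.
Open Scope R_scope.

Definition right_continuous_at (f : R -> R) (y : R) : Prop :=
  forall eps, eps > 0 -> exists delta, delta > 0 /\
    forall z, y <= z < y + delta -> Rabs (f z - f y) < eps.

Definition is_left_limit (f : R -> R) (y l : R) : Prop :=
  forall eps, eps > 0 -> exists delta, delta > 0 /\
    forall z, y - delta < z < y -> Rabs (f z - l) < eps.

Definition subquadratic (f : R -> R) : Prop :=
  forall eps, eps > 0 -> exists M, forall x, Rabs x > M -> Rabs (f x / x ^ 2) < eps.

(* psibar y = psi0(y) \/ psi0(y-), given the left-limit function psim *)
Definition psibar (psi0 psim : R -> R) (y : R) : R := Rmax (psi0 y) (psim y).

Definition is_lower_bound (S : R -> Prop) (m : R) : Prop := forall y, S y -> m <= y.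
Definition is_glb (S : R -> Prop) (m : R) : Prop :=
  is_lower_bound S m /\ (forall b, is_lower_bound S b -> b <= m).

(* Infimum in (-oo, +oo]: None stands for +oo = inf of the empty set. *)
Definition is_inf (S : R -> Prop) (v : option R) : Prop :=
  match v with
  | None => forall y, ~ S y
  | Some m => (exists y, S y) /\ is_glb S m
  end.

Definition condL (pb : R -> R) (y : R) : Prop :=
  forall x, x > 0 -> pb (y - x) - pb y <= / 2 * x ^ 2.
Definition condR (pb : R -> R) (y : R) : Prop :=
  forall x, x > 0 -> pb (y + x) - pb y < / 2 * x ^ 2.

Definition set_t (pb : R -> R) (y : R) : Prop := 0 <= y /\ condL pb y /\ condR pb y.
Definition set_r (pb : R -> R) (y : R) : Prop := 0 <= y /\ condL pb y.
(* {y >= r : condR y}; empty when r = +oo *)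
Definition set_s (pb : R -> R) (r : option R) (y : R) : Prop :=
  match r with
  | None => False
  | Some r0 => r0 <= y /\ condR pb y
  end.

(* Every t-point is an s-point, so s <= t.  Conversely, given an s-point y we
   produce a t-point c <= y.  Let r0 = r; the left condition L is closed
   because psibar is upper semicontinuous (usc), so r0 itself satisfies L.
   Take c = sup {x in [r0, y] | L x}; again c satisfies L.  To see that c also
   satisfies the right condition R, tilt psibar by the parabola centred at c,
   g w = psibar w - (w - c)^2 / 2.  Condition L at c bounds g to the left of c,
   condition R at y bounds it to the right of y, and g is usc, so g attains a
   global maximum in [c, y]; any global maximiser a >= c satisfies L.  By
   maximality of c the only candidate is a = c, and a failure of R at c would
   produce another maximiser in (c, y], which is impossible. *)

From Stdlib Require Import Reals Lra Psatz Classical List RList.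
Open Scope R_scope.

Definition usc (g : R -> R) : Prop :=
  forall x eps, eps > 0 -> exists delta, delta > 0 /\
    forall z, Rabs (z - x) < delta -> g z <= g x + eps.

Lemma usc_plus_continuous (g h : R -> R) :
  usc g -> continuity h -> usc (fun w => g w + h w).
Proof.
  intros Hg Hh x eps Heps.
  destruct (Hg x (eps / 2)) as [d1 [Hd1 H1]]; [lra|].
  destruct (Hh x (eps / 2)) as [d2 [Hd2 H2]]; [lra|].
  exists (Rmin d1 d2); split; [apply Rmin_pos; lra|].
  intros z Hz.
  pose proof (Rmin_l d1 d2); pose proof (Rmin_r d1 d2).
  specialize (H1 z ltac:(lra)).
  destruct (Req_dec z x) as [->|Hzx]; [lra|].
  assert (Hhz : R_dist (h z) (h x) < eps / 2).
  { apply H2. split; [split; [exact I | congruence] | simpl; unfold R_dist; lra]. }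
  unfold R_dist in Hhz; apply Rabs_def2 in Hhz; lra.
Qed.

Lemma usc_limit_le (g : R -> R) (c B : R) :
  usc g -> (forall d, d > 0 -> exists x, Rabs (x - c) < d /\ B <= g x) -> B <= g c.
Proof.
  intros Hg Hnear.
  apply Rnot_lt_le; intro Hlt.
  destruct (Hg c ((B - g c) / 2)) as [d [Hd Hup]]; [lra|].
  destruct (Hnear d Hd) as [x [Hx HBx]].
  specialize (Hup x Hx); lra.
Qed.

Lemma list_argmax (g : R -> R) (l : list R) :
  l <> nil -> exists x, In x l /\ forall y, In y l -> g y <= g x.
Proof.
  intros Hl.
  assert (Hin : In (MaxRlist (map g l)) (map g l)).
  { apply MaxRlist_P2. destruct l as [|a l]; [congruence|].
    exists (g a); left; reflexivity. }
  apply in_map_iff in Hin as [x [Hx Hxl]].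
  exists x; split; [exact Hxl|].
  intros y Hy; rewrite Hx; apply MaxRlist_P1, in_map, Hy.
Qed.

(* Otherwise the sets {w | g w < g x} cover [a, b]; a finite subcover has a
   g-largest index, which is itself covered by a strictly larger one. *)
Lemma usc_max_interval (g : R -> R) (a b : R) :
  usc g -> a <= b ->
  exists m, a <= m <= b /\ forall z, a <= z <= b -> g z <= g m.
Proof.
  intros Hu Hab.
  apply NNPP; intro Hno.
  assert (Hbetter : forall w, a <= w <= b -> exists z, a <= z <= b /\ g w < g z).
  { intros w Hw. apply NNPP; intro Hnz. apply Hno. exists w; split; [exact Hw|].
    intros z Hz. apply Rnot_lt_le; intro Hlt. apply Hnz. exists z; auto. }
  set (fam := mkfamily (fun x => a <= x <= b)
                 (fun x w => a <= x <= b /\ g w < g x)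
                 (fun x H => match H with ex_intro _ _ (conj h _) => h end)).
  assert (Hcov : covering_open_set (fun c => a <= c <= b) fam).
  { split.
    - intros w Hw. destruct (Hbetter w Hw) as [z [Hz Hgz]]. exists z; simpl; auto.
    - intros x w [Hx Hw]; simpl in *.
      destruct (Hu w ((g x - g w) / 2)) as [d [Hd Hd2]]; [lra|].
      exists (mkposreal d Hd). intros v Hv; unfold disc in Hv; simpl in Hv.
      split; [exact Hx|]. specialize (Hd2 v Hv); lra. }
  destruct (compact_P3 a b fam Hcov) as [D [Hsub [l Hl]]].
  assert (Hne : l <> nil).
  { intro E. destruct (Hsub a) as [y [[Hy1 Hy2] HD]]; [lra|].
    assert (Hy : In y l) by (apply Hl; split; simpl; auto).
    rewrite E in Hy; exact Hy. }
  destruct (list_argmax g l Hne) as [xk [Hxk Hmax]].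
  apply Hl in Hxk as [Hxk _]; simpl in Hxk.
  destruct (Hsub xk Hxk) as [y [[Hy1 Hy2] HD]]; simpl in Hy1.
  assert (Hy : In y l) by (apply Hl; split; simpl; tauto).
  specialize (Hmax y Hy); lra.
Qed.

Lemma usc_global_max (g : R -> R) (c y : R) :
  usc g -> c <= y ->
  (forall w, w < c -> g w <= g c) -> (forall w, y < w -> g w < g y) ->
  exists m, c <= m <= y /\ forall w, g w <= g m.
Proof.
  intros Hu Hcy Hleft Hright.
  destruct (usc_max_interval g c y Hu Hcy) as [m [Hm Hmax]].
  exists m; split; [exact Hm|]. intros w.
  destruct (Rlt_dec w c) as [Hwc|Hwc].
  - specialize (Hleft w Hwc); specialize (Hmax c ltac:(lra)); lra.
  - destruct (Rle_dec w y) as [Hwy|Hwy].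
    + apply Hmax; lra.
    + specialize (Hright w ltac:(lra)); specialize (Hmax y ltac:(lra)); lra.
Qed.

Lemma lub_approx (S : R -> Prop) (m : R) :
  is_lub S m -> forall d, d > 0 -> exists x, S x /\ Rabs (x - m) < d.
Proof.
  intros [Hub Hlub] d Hd.
  apply NNPP; intro Hfar.
  assert (m <= m - d); [|lra].
  apply Hlub; intros x Hx.
  apply Rnot_lt_le; intro Hlt. apply Hfar. exists x; split; [exact Hx|].
  specialize (Hub x Hx). apply Rabs_def1; lra.
Qed.

Lemma glb_approx (S : R -> Prop) (m : R) :
  is_glb S m -> forall d, d > 0 -> exists x, S x /\ Rabs (x - m) < d.
Proof.
  intros [Hlb Hglb] d Hd.
  apply NNPP; intro Hfar.
  assert (m + d <= m); [|lra].
  apply Hglb; intros x Hx.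
  apply Rnot_lt_le; intro Hlt. apply Hfar. exists x; split; [exact Hx|].
  specialize (Hlb x Hx). apply Rabs_def1; lra.
Qed.

Section Psibar.

Variables psi0 psim : R -> R.
Hypothesis Hrc : forall y, right_continuous_at psi0 y.
Hypothesis Hll : forall y, is_left_limit psi0 y (psim y).

Lemma psi0_le_near (x eps : R) : eps > 0 ->
  exists d, d > 0 /\ forall z, Rabs (z - x) < d -> psi0 z <= psibar psi0 psim x + eps.
Proof.
  intros Heps.
  destruct (Hrc x eps Heps) as [d1 [Hd1 Hright]].
  destruct (Hll x eps Heps) as [d2 [Hd2 Hleft]].
  exists (Rmin d1 d2); split; [apply Rmin_pos; lra|].
  intros z Hz; apply Rabs_def2 in Hz.
  pose proof (Rmin_l d1 d2); pose proof (Rmin_r d1 d2).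
  pose proof (Rmax_l (psi0 x) (psim x)); pose proof (Rmax_r (psi0 x) (psim x)).
  unfold psibar.
  destruct (Rlt_dec z x) as [Hzx|Hzx].
  - specialize (Hleft z ltac:(lra)); apply Rabs_def2 in Hleft; lra.
  - specialize (Hright z ltac:(lra)); apply Rabs_def2 in Hright; lra.
Qed.

Lemma left_limit_le (z d B : R) :
  d > 0 -> (forall w, z - d < w < z -> psi0 w <= B) -> psim z <= B.
Proof.
  intros Hd Hbound.
  apply Rnot_lt_le; intro Hlt.
  destruct (Hll z (psim z - B) ltac:(lra)) as [d' [Hd' Hlim]].
  pose proof (Rmin_l d d'); pose proof (Rmin_r d d').
  assert (Hmin : Rmin d d' > 0) by (apply Rmin_pos; lra).
  set (w := z - Rmin d d' / 2).
  specialize (Hlim w ltac:(unfold w; lra)); apply Rabs_def2 in Hlim.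
  specialize (Hbound w ltac:(unfold w; lra)); lra.
Qed.

Lemma psibar_usc : usc (psibar psi0 psim).
Proof.
  intros x eps Heps.
  destruct (psi0_le_near x eps Heps) as [d [Hd Hnear]].
  exists d; split; [exact Hd|]. intros z Hz.
  unfold psibar at 1; apply Rmax_lub; [apply Hnear, Hz|].
  apply (left_limit_le z (d - Rabs (z - x))); [lra|].
  intros w Hw. apply Hnear.
  pose proof (Rle_abs (z - x)); pose proof (Rle_abs (- (z - x))).
  rewrite Rabs_Ropp in *. apply Rabs_def1; lra.
Qed.

End Psibar.

Definition tilt (pb : R -> R) (c w : R) : R := pb w - / 2 * (w - c) ^ 2.

Lemma tilt_usc (pb : R -> R) (c : R) : usc pb -> usc (tilt pb c).
Proof.
  intros Hu x eps Heps.
  assert (Hcont : continuity (fun w => - / 2 * (w - c) ^ 2)) by reg.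
  destruct (usc_plus_continuous pb _ Hu Hcont x eps Heps) as [d [Hd Hnear]].
  exists d; split; [exact Hd|].
  intros z Hz; specialize (Hnear z Hz); unfold tilt; lra.
Qed.

Lemma condL_closed (pb : R -> R) (c : R) : usc pb ->
  (forall d, d > 0 -> exists x, Rabs (x - c) < d /\ condL pb x) -> condL pb c.
Proof.
  intros Hu Hnear u Hu0.
  set (h := fun x => pb x + / 2 * (u + x - c) ^ 2).
  assert (Hh : usc h) by (apply usc_plus_continuous; [exact Hu | reg]).
  assert (Hc : pb (c - u) <= h c).
  { apply usc_limit_le; [exact Hh|]. intros d Hd.
    destruct (Hnear (Rmin d u)) as [x [Hx HLx]]; [apply Rmin_pos; lra|].
    pose proof (Rmin_l d u); pose proof (Rmin_r d u).
    apply Rabs_def2 in Hx.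
    exists x; split; [apply Rabs_def1; lra|].
    specialize (HLx (u + x - c) ltac:(lra)).
    replace (x - (u + x - c)) with (c - u) in HLx by ring.
    unfold h; lra. }
  unfold h in Hc. replace (u + c - c) with u in Hc by ring. lra.
Qed.

Lemma condL_of_tilt_max (pb : R -> R) (c a : R) :
  c <= a -> (forall w, tilt pb c w <= tilt pb c a) -> condL pb a.
Proof.
  intros Hca Hmax u Hu.
  specialize (Hmax (a - u)); unfold tilt in Hmax.
  assert (0 <= u * (a - c)) by (apply Rmult_le_pos; lra).
  nra.
Qed.

Lemma tilt_left_of_condL (pb : R -> R) (c : R) :
  condL pb c -> forall w, w < c -> tilt pb c w <= tilt pb c c.
Proof.
  intros HL w Hw. specialize (HL (c - w) ltac:(lra)).
  replace (c - (c - w)) with w in HL by ring.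
  unfold tilt; replace ((w - c) ^ 2) with ((c - w) ^ 2) by ring.
  replace ((c - c) ^ 2) with 0 by ring. lra.
Qed.

Lemma tilt_right_of_condR (pb : R -> R) (c y : R) :
  c <= y -> condR pb y -> forall w, y < w -> tilt pb c w < tilt pb c y.
Proof.
  intros Hcy HR w Hw. specialize (HR (w - y) ltac:(lra)).
  replace (y + (w - y)) with w in HR by ring.
  unfold tilt. nra.
Qed.

Lemma condR_of_no_condL_between (pb : R -> R) (c y : R) :
  usc pb -> c <= y -> condL pb c -> condR pb y ->
  (forall a, c < a <= y -> ~ condL pb a) -> condR pb c.
Proof.
  intros Hu Hcy HLc HRy Hnone.
  destruct (usc_global_max (tilt pb c) c y (tilt_usc pb c Hu) Hcy
              (tilt_left_of_condL pb c HLc) (tilt_right_of_condR pb c y Hcy HRy))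
    as [m [Hm Hmax]].
  assert (Hmc : m = c).
  { apply NNPP; intro Hmc.
    apply (Hnone m ltac:(lra)), (condL_of_tilt_max pb c m ltac:(lra) Hmax). }
  subst m. intros u Hu0. apply Rnot_le_lt; intro Hviol.
  assert (Hcu : forall w, tilt pb c w <= tilt pb c (c + u)).
  { intros w. specialize (Hmax w). unfold tilt in *.
    replace (c + u - c) with u by ring. replace ((c - c) ^ 2) with 0 in Hmax by ring.
    lra. }
  destruct (Rle_dec (c + u) y) as [Hy|Hy].
  - apply (Hnone (c + u) ltac:(lra)), (condL_of_tilt_max pb c (c + u) ltac:(lra) Hcu).
  - pose proof (tilt_right_of_condR pb c y Hcy HRy (c + u) ltac:(lra)).
    specialize (Hcu y); lra.
Qed.

(* Below every point y >= r0 satisfying R there is a t-point, provided r0 >= 0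
   satisfies L: the supremum of the L-points of [r0, y]. *)
Lemma exists_t_below (pb : R -> R) (r0 y : R) :
  usc pb -> 0 <= r0 -> condL pb r0 -> r0 <= y -> condR pb y ->
  exists c, set_t pb c /\ c <= y.
Proof.
  intros Hu Hr0 HLr0 Hry HRy.
  set (S := fun x => r0 <= x <= y /\ condL pb x).
  destruct (completeness S) as [c Hc].
  { exists y. intros x [Hx _]; lra. }
  { exists r0. split; [lra | exact HLr0]. }
  assert (Hrc : r0 <= c) by (apply (proj1 Hc); split; [lra | exact HLr0]).
  assert (Hcy : c <= y) by (apply (proj2 Hc); intros x [Hx _]; lra).
  assert (HLc : condL pb c).
  { apply condL_closed; [exact Hu|]. intros d Hd.
    destruct (lub_approx S c Hc d Hd) as [x [[_ HLx] Hx]]. eauto. }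
  exists c; split; [|exact Hcy].
  split; [lra|]. split; [exact HLc|].
  apply (condR_of_no_condL_between pb c y Hu Hcy HLc HRy).
  intros a Ha HLa.
  assert (a <= c) by (apply (proj1 Hc); split; [lra | exact HLa]). lra.
Qed.

Lemma inf_r_condL (pb : R -> R) (r0 : R) :
  usc pb -> is_inf (set_r pb) (Some r0) -> 0 <= r0 /\ condL pb r0.
Proof.
  intros Hu [_ Hglb]. split.
  - apply (proj2 Hglb). intros z [Hz _]; exact Hz.
  - apply condL_closed; [exact Hu|]. intros d Hd.
    destruct (glb_approx _ r0 Hglb d Hd) as [x [[_ HLx] Hx]]. eauto.
Qed.

Lemma is_inf_eq_of_cofinal (S T : R -> Prop) (a b : option R) :
  is_inf S a -> is_inf T b -> (forall y, T y -> S y) ->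
  (forall y, S y -> exists x, T x /\ x <= y) -> a = b.
Proof.
  intros HS HT HTS HST.
  destruct a as [a0|]; destruct b as [b0|]; simpl in HS, HT.
  - destruct HS as [_ [HSlb HSglb]]; destruct HT as [_ [HTlb HTglb]].
    f_equal; apply Rle_antisym.
    + apply HTglb; intros y Hy; apply HSlb, HTS, Hy.
    + apply HSglb; intros y Hy. destruct (HST y Hy) as [x [Hx Hxy]].
      specialize (HTlb x Hx); lra.
  - destruct HS as [[y Hy] _]. destruct (HST y Hy) as [x [Hx _]].
    exfalso; exact (HT x Hx).
  - destruct HT as [[y Hy] _]. exfalso; exact (HS y (HTS y Hy)).
  - reflexivity.
Qed.

Theorem lemma5p2 (psi0 psim : R -> R)
  (Hrc : forall y, right_continuous_at psi0 y)
  (Hll : forall y, is_left_limit psi0 y (psim y))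
  (Hgrowth : subquadratic psi0)
  (r s t : option R)
  (Hr : is_inf (set_r (psibar psi0 psim)) r)
  (Hs : is_inf (set_s (psibar psi0 psim) r) s)
  (Ht : is_inf (set_t (psibar psi0 psim)) t) :
  s = t.
Proof.
  set (pb := psibar psi0 psim) in *.
  assert (Hu : usc pb) by (apply psibar_usc; assumption).
  apply (is_inf_eq_of_cofinal _ _ s t Hs Ht).
  -
    intros y [Hy0 [HL HR]]. destruct r as [r0|]; simpl in *.
    + split; [|exact HR]. apply (proj1 (proj2 Hr)). split; assumption.
    + exact (Hr y (conj Hy0 HL)).
  -
    intros y Hy. destruct r as [r0|]; [|destruct Hy].
    destruct Hy as [Hry HRy].
    destruct (inf_r_condL pb r0 Hu Hr) as [H0 HL0].
    exact (exists_t_below pb r0 y Hu H0 HL0 Hry HRy).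
Qed.
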